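(* Let $A\in\mathbb R^{d\times d}$ and suppose there is $\omega_*\in\mathbb R^d$, $\omega_*\ne0$, with $A\omega_*=A^{\mathsf T}\omega_*=0$. For any $c\in\mathbb R$ define $\tilde{\mathcal E}(\omega):=c-\langle\omega_*,\omega\rangle$ and $$\tilde{\mathbb J}(\omega):=\frac{1}{2|\omega_*|^2}\Big(\omega_*\otimes(A\omega)-(A\omega)\otimes\omega_*\Big).$$ Then the linear ODE $\dot\omega=\frac12A\omega$ admits the Hamiltonian system $(\mathbb R^d,\tilde{\mathcal E},\tilde{\mathbb J})$: $\tilde{\mathbb J}(\omega)$ is skew-symmetric for every $\omega$, the bracket $\{\mathcal G_1,\mathcal G_2\}(\omega):=\langle D\mathcal G_1(\omega),\tilde{\mathbb J}(\omega)D\mathcal G_2(\omega)\rangle$ satisfies the Jacobi identity for all $C^2$ functions $\mathcal G_1,\mathcal G_2,\mathcal G_3:\mathbb R^d\to\mathbb R$, and $\frac12A\omega=\tilde{\mathbb J}(\omega)D\tilde{\mathcal E}(\omega)$ for all $\omega\in\mathbb R^d$.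
   Context: $\langle\cdot,\cdot\rangle$ is the Euclidean inner product, $|\cdot|$ the Euclidean norm, $D$ the gradient, and $a\otimes b$ the outer product, i.e. the matrix with $(a\otimes b)v=\langle b,v\rangle a$. *)

From HB Require Import structures.
From mathcomp Require Import all_boot all_order all_algebra.
From mathcomp Require Import all_classical all_reals all_analysis.
Set Implicit Arguments. Unset Strict Implicit. Unset Printing Implicit Defensive.
Import Order.TTheory GRing.Theory Num.Theory.
Import numFieldNormedType.Exports.
Local Open Scope ring_scope.

Section Defs.
Variables (R : realType) (d : nat).
Notation vec := 'cV[R]_d.

Definition inner (a b : vec) : R := \sum_(i < d) a i 0 * b i 0.

Definition sqnorm (a : vec) : R := inner a a.

Definition outer (a b : vec) : 'M[R]_d := a *m b^T.

Definition ebase (i : 'I_d) : vec := delta_mx i 0.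

Definition partial (i : 'I_d) (f : vec -> R) (x : vec) : R := derive f x (ebase i).

Definition grad (f : vec -> R) (x : vec) : vec := \col_(i < d) partial i f x.

Definition C2 (f : vec -> R) : Prop :=
  (forall i x, derivable f x (ebase i)) /\
  (forall i, continuous (partial i f)) /\
  (forall i j x, derivable (partial i f) x (ebase j)) /\
  (forall i j, continuous (partial j (partial i f))).

Definition pbracket (J : vec -> 'M[R]_d) (G1 G2 : vec -> R) (w : vec) : R :=
  inner (grad G1 w) (J w *m grad G2 w).

Definition Etilde (c : R) (ws : vec) (w : vec) : R := c - inner ws w.

Definition Jtilde (A : 'M[R]_d) (ws : vec) (w : vec) : 'M[R]_d :=
  (2 * sqnorm ws)^-1 *: (outer ws (A *m w) - outer (A *m w) ws).

End Defs.

(* Write X for the constant vector field ws and Y for the linear field w |-> A w.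
   Then {F, G} = (X F * Y G - Y F * X G) / (2 |ws|^2) is the bracket of the bivector
   X /\ Y.  Expanding X and Y of a bracket by the Leibniz rule turns the Jacobi
   identity into a polynomial identity in first and second derivatives along X and Y,
   provided X (Y F) = Y (X F).  By Clairaut's theorem (symmetry of the Hessian) the
   difference X (Y F) - Y (X F) is <D F, A ws>, which vanishes because A ws = 0.
   Finally D Etilde = - ws and A^T ws = 0 give Jtilde(w) D Etilde(w) = A w / 2. *)

From HB Require Import structures.
From mathcomp Require Import all_boot all_order all_algebra.
From mathcomp Require Import all_classical all_reals all_analysis.
From mathcomp Require Import ring.
Set Implicit Arguments. Unset Strict Implicit. Unset Printing Implicit Defensive.
Import Order.TTheory GRing.Theory Num.Theory.
Import numFieldNormedType.Exports.
Local Open Scope classical_set_scope.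
Local Open Scope ring_scope.

Section Clairaut.
Variables (R : realType) (V : normedModType R).
Implicit Types (f : V -> R) (u v x : V).

Lemma is_derive_line f u a (s : R) : derivable f (s *: u + a) u ->
  is_derive s 1 (fun t : R => f (t *: u + a)) ('D_u f (s *: u + a)).
Proof.
move=> df; pose g t := f (t *: u + a).
have E : (fun h : R => h^-1 *: ((g \o shift s) (h *: (1:R)) - g s)) =
   (fun h : R => h^-1 *: ((f \o shift (s *: u + a)) (h *: u) - f (s *: u + a))).
  by apply/funext => h /=; rewrite /g /= [h *: 1]mulr1 scalerDl addrA.
apply: DeriveDef; first by rewrite /derivable E.
by rewrite /derive E.
Qed.

Lemma cvg_ball_lt (g : V -> R) x (e : R) : 0 < e -> g @ x --> g x ->
  exists2 r : R, 0 < r & forall y, `|x - y| < r -> `|g x - g y| < e.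
Proof.
move=> e0 /cvgrPdist_lt /(_ e e0); rewrite nearE => /nbhs_ballP [r r0 Hr].
by exists r => // y xy; apply: Hr; rewrite -ball_normE.
Qed.

Lemma second_difference_mvt f x u v (h : R) : 0 <= h ->
  (forall y, derivable f y u) -> (forall y, derivable ('D_u f) y v) ->
  exists s t, [/\ 0 <= s <= h, 0 <= t <= h &
   f (h *: u + (h *: v + x)) - f (h *: u + x) - f (h *: v + x) + f x
     = h * h * 'D_v ('D_u f) (t *: v + (s *: u + x))].
Proof.
move=> h0 du dv.
pose phi s := f (s *: u + (h *: v + x)) - f (s *: u + x).
pose dphi s := 'D_u f (s *: u + (h *: v + x)) - 'D_u f (s *: u + x).
have dphiP s : is_derive s (1:R) phi (dphi s).
  exact: is_deriveB (is_derive_line (du _)) (is_derive_line (du _)).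
have [s sh Es] : exists2 s, s \in `[0, h]%R & phi h - phi 0 = dphi s * (h - 0).
  apply: (MVT_segment h0).
  by apply: derivable_within_continuous => z _; have [] := dphiP z.
pose psi t := 'D_u f (t *: v + (s *: u + x)).
have psiP t : is_derive t (1:R) psi ('D_v ('D_u f) (t *: v + (s *: u + x))).
  exact: is_derive_line.
have [t th Et] : exists2 t, t \in `[0, h]%R &
    psi h - psi 0 = 'D_v ('D_u f) (t *: v + (s *: u + x)) * (h - 0).
  apply: (MVT_segment h0).
  by apply: derivable_within_continuous => z _; have [] := psiP z.
exists s, t; split; [by move: sh; rewrite in_itv | by move: th; rewrite in_itv |].
have Eds : dphi s = psi h - psi 0 by rewrite /dphi /psi scale0r add0r addrCA.
move: Es; rewrite Eds Et /phi !scale0r !add0r subr0 => Es.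
by rewrite [RHS]mulrC mulrA -Es; ring.
Qed.

Lemma clairaut f u v x :
  (forall y, derivable f y u) -> (forall y, derivable f y v) ->
  (forall y, derivable ('D_u f) y v) -> (forall y, derivable ('D_v f) y u) ->
  continuous ('D_v ('D_u f)) -> continuous ('D_u ('D_v f)) ->
  'D_v ('D_u f) x = 'D_u ('D_v f) x.
Proof.
move=> du dv duv dvu c1 c2.
apply/eqP/negPn/negP => neq.
pose e : R := `|'D_v ('D_u f) x - 'D_u ('D_v f) x|.
have e20 : 0 < e / 2 by rewrite divr_gt0 // normr_gt0 subr_eq0.
have [r1 r10 H1] := cvg_ball_lt e20 (c1 x).
have [r2 r20 H2] := cvg_ball_lt e20 (c2 x).
pose M := `|u| + `|v| + 1.
have M0 : 0 < M by rewrite ltr_wpDl // addr_ge0.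
pose h := Num.min r1 r2 / (2 * M).
have h0 : 0 < h by rewrite divr_gt0 ?mulr_gt0 // lt_min r10 r20.
have hM : h * M < Num.min r1 r2.
  have -> : h * M = Num.min r1 r2 / 2 by rewrite /h; field; rewrite gt_eqF.
  by rewrite ltr_pdivrMr // ltr_pMr ?ltr1n // lt_min r10 r20.
have near_x (s t : R) a b : 0 <= s <= h -> 0 <= t <= h -> `|a| + `|b| <= M ->
    `|x - (t *: b + (s *: a + x))| < Num.min r1 r2.
  move=> /andP[s0 sh] /andP[t0 th] abM; apply: le_lt_trans hM.
  rewrite addrA opprD addrCA subrr addr0 normrN.
  apply: le_trans (ler_normD _ _) _.
  rewrite !normrZ !ger0_norm // addrC.
  apply: le_trans (ler_wpM2l (ltW h0) abM).
  by rewrite mulrDr lerD // ler_wpM2r.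
have [s1 [t1 [hs1 ht1 E1]]] := second_difference_mvt x (ltW h0) du duv.
have [s2 [t2 [hs2 ht2 E2]]] := second_difference_mvt x (ltW h0) dv dvu.
pose y1 := t1 *: v + (s1 *: u + x).
pose y2 := t2 *: u + (s2 *: v + x).
have Ey : 'D_v ('D_u f) y1 = 'D_u ('D_v f) y2.
  apply: (@mulfI _ (h * h)); first by rewrite mulf_neq0 // gt_eqF.
  apply: etrans (esym E1) (etrans _ E2).
  by rewrite [h *: v + (h *: u + x)]addrCA; congr (_ + _); exact: addrAC.
have L1 : `|'D_v ('D_u f) x - 'D_v ('D_u f) y1| < e / 2.
  apply/H1/(lt_le_trans (near_x _ _ _ _ hs1 ht1 _)); first by rewrite lerDl.
  by rewrite ge_min lexx.
have L2 : `|'D_u ('D_v f) y2 - 'D_u ('D_v f) x| < e / 2.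
  rewrite distrC; apply/H2/(lt_le_trans (near_x _ _ _ _ hs2 ht2 _)).
    by rewrite addrC lerDl.
  by rewrite ge_min lexx orbT.
have : e < e / 2 + e / 2.
  apply: le_lt_trans (ltrD L1 L2).
  by rewrite /e -Ey; apply: le_trans (ler_normD _ _); rewrite addrA subrK.
by rewrite -splitr ltxx.
Qed.

End Clairaut.

Section InnerProduct.
Variables (R : realType) (d : nat).
Notation vec := 'cV[R]_d.
Implicit Types (u v w : vec).

Lemma inner_mx u v : inner u v = (u^T *m v) 0 0.
Proof. by rewrite /inner !mxE; apply: eq_bigr => i _; rewrite !mxE. Qed.

Lemma innerC u v : inner u v = inner v u.
Proof. by apply: eq_bigr => i _; rewrite mulrC. Qed.

Lemma innerDr u v w : inner u (v + w) = inner u v + inner u w.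
Proof. by rewrite !inner_mx mulmxDr mxE. Qed.

Lemma innerZr u v (k : R) : inner u (k *: v) = k * inner u v.
Proof. by rewrite !inner_mx -scalemxAr mxE. Qed.

Lemma innerNr u v : inner u (- v) = - inner u v.
Proof. by rewrite -scaleN1r innerZr mulN1r. Qed.

Lemma innerBr u v w : inner u (v - w) = inner u v - inner u w.
Proof. by rewrite innerDr innerNr. Qed.

Lemma inner0r u : inner u 0 = 0.
Proof. by rewrite -(scale0r 0) innerZr mul0r. Qed.

Lemma inner_mulmx (M : 'M[R]_d) u v : inner (M *m u) v = inner u (M^T *m v).
Proof. by rewrite !inner_mx trmx_mul mulmxA. Qed.

Lemma inner_ebase u i : inner u (ebase R i) = u i 0.
Proof. by rewrite inner_mx /ebase -colE !mxE. Qed.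

Lemma outer_mulmx u v w : outer u v *m w = inner v w *: u.
Proof.
apply/matrixP => i j; rewrite [j]ord1 !mxE /inner big_distrl /=.
by apply: eq_bigr => k _; rewrite !mxE big_ord1 !mxE; ring.
Qed.

Lemma sqnorm_eq0 u : (sqnorm u == 0) = (u == 0).
Proof.
apply/eqP/eqP => [u0|->]; last by rewrite /sqnorm inner0r.
apply/matrixP => i j; rewrite [j]ord1 mxE.
have /psumr_eq0P : \sum_(k < d) u k 0 ^+ 2 = 0 by [].
by move=> /(_ (fun k _ => sqr_ge0 _) i isT) /eqP; rewrite sqrf_eq0 => /eqP.
Qed.

End InnerProduct.

Section Gradient.
Variables (R : realType) (d : nat).
Notation vec := 'cV[R]_d.
Implicit Types (f g F : vec -> R) (u v w : vec).

Definition hess F w : 'M[R]_d := \matrix_(i, j) partial i (partial j F) w.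

Definition derive_along (X : vec -> vec) F w := inner (grad F w) (X w).

Definition partial_derivable f w := forall i, derivable f w (ebase R i).

Lemma is_derive_affine f w v (c : R) :
  (forall h : R, f (h *: v + w) = f w + h * c) -> is_derive w v f c.
Proof.
move=> fE.
have E : (fun h : R => h^-1 *: ((f \o shift w) (h *: v) - f w)) =
         (fun h : R => h^-1 * (h * c)).
  by apply/funext => h /=; rewrite fE addrAC subrr add0r.
have qc : (fun h : R => h^-1 * (h * c)) @ 0^' --> c.
  apply/cvgrPdist_lt => e e0; near=> h.
  by rewrite mulKf ?subrr ?normr0 //; near: h; exact: nbhs_dnbhs_neq.
by split; rewrite /derivable /derive E; [exact: cvgP qc | exact: cvg_lim].
Unshelve. all: by end_near.
Qed.

Lemma hess_sym F w : C2 F -> (hess F w)^T = hess F w.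
Proof.
case=> dF [_ [ddF cddF]]; apply/matrixP => i j; rewrite !mxE.
exact: clairaut (dF i) (dF j) (ddF i j) (ddF j i) (cddF i j) (cddF j i).
Qed.

Lemma is_derive_partial F i j w : C2 F ->
  is_derive w (ebase R j) (partial i F) (hess F w j i).
Proof. by case=> _ [_ [ddF _]]; rewrite mxE; apply: derivableP. Qed.

Lemma is_derive_coord_mulmx (B : 'M[R]_d) i j w :
  is_derive w (ebase R j) (fun y => (B *m y) i 0) (B i j).
Proof.
apply: is_derive_affine => h.
by rewrite mulmxDr -scalemxAr /ebase -colE !mxE addrC mulrC.
Qed.

Lemma is_derive_along_cst F u j w : C2 F ->
  is_derive w (ebase R j) (derive_along (fun=> u) F) ((hess F w *m u) j 0).
Proof.
move=> CF.
have -> : derive_along (fun=> u) F = \sum_(i < d) (u i 0 \*: partial i F).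
  by apply/funext => y; rewrite fct_sumE; apply: eq_bigr => i _; rewrite mxE mulrC.
rewrite mxE; apply: is_derive_eq.
  exact: is_derive_sum (fun i => is_deriveZ (u i 0) (is_derive_partial i j w CF)).
by apply: eq_bigr => i _; rewrite mulrC.
Qed.

Lemma is_derive_along_mulmx F (B : 'M[R]_d) j w : C2 F ->
  is_derive w (ebase R j) (derive_along (mulmx B) F)
    ((hess F w *m (B *m w)) j 0 + (B^T *m grad F w) j 0).
Proof.
move=> CF.
have -> : derive_along (mulmx B) F =
          \sum_(i < d) (partial i F * (fun y => (B *m y) i 0)).
  by apply/funext => y; rewrite fct_sumE; apply: eq_bigr => i _; rewrite mxE.
apply: is_derive_eq.
  exact: is_derive_sum (fun i => is_deriveM (is_derive_partial i j w CF)
                                            (is_derive_coord_mulmx B i j w)).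
rewrite [(hess F w *m _) j 0]mxE [(B^T *m _) j 0]mxE -big_split.
apply: eq_bigr => i _ /=.
by rewrite addrC; congr (_ + _); [rewrite !mxE |]; exact: mulrC.
Qed.

Lemma grad_along_cst F u w : C2 F -> grad (derive_along (fun=> u) F) w = hess F w *m u.
Proof.
move=> CF; apply/matrixP => j k; rewrite [k]ord1 mxE.
by case: (is_derive_along_cst u j w CF).
Qed.

Lemma grad_along_mulmx F (B : 'M[R]_d) w : C2 F ->
  grad (derive_along (mulmx B) F) w = hess F w *m (B *m w) + B^T *m grad F w.
Proof.
move=> CF; apply/matrixP => j k; rewrite [k]ord1 mxE [RHS]mxE.
by case: (is_derive_along_mulmx B j w CF).
Qed.

Lemma gradM f g w : partial_derivable f w -> partial_derivable g w ->
  grad (f * g) w = f w *: grad g w + g w *: grad f w.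
Proof. by move=> df dg; apply/matrixP => i j; rewrite [j]ord1 !mxE /partial deriveM. Qed.

Lemma gradB f g w : partial_derivable f w -> partial_derivable g w ->
  grad (f - g) w = grad f w - grad g w.
Proof. by move=> df dg; apply/matrixP => i j; rewrite [j]ord1 !mxE /partial deriveB. Qed.

Lemma gradZ (k : R) f w : partial_derivable f w -> grad (k \*: f) w = k *: grad f w.
Proof. by move=> df; apply/matrixP => i j; rewrite [j]ord1 !mxE /partial deriveZ. Qed.

Lemma derive_alongM X f g w : partial_derivable f w -> partial_derivable g w ->
  derive_along X (f * g) w = f w * derive_along X g w + g w * derive_along X f w.
Proof.
by move=> df dg; rewrite /derive_along gradM // innerC innerDr !innerZr !(innerC (X w)).
Qed.

Lemma derive_alongB X f g w : partial_derivable f w -> partial_derivable g w ->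
  derive_along X (f - g) w = derive_along X f w - derive_along X g w.
Proof.
by move=> df dg; rewrite /derive_along gradB // innerC innerBr !(innerC (X w)).
Qed.

Lemma derive_alongZ X (k : R) f w : partial_derivable f w ->
  derive_along X (k \*: f) w = k * derive_along X f w.
Proof. by move=> df; rewrite /derive_along gradZ // innerC innerZr innerC. Qed.

Lemma partial_derivable_along_cst F u w : C2 F ->
  partial_derivable (derive_along (fun=> u) F) w.
Proof. by move=> CF j; case: (is_derive_along_cst u j w CF). Qed.

Lemma partial_derivable_along_mulmx F (B : 'M[R]_d) w : C2 F ->
  partial_derivable (derive_along (mulmx B) F) w.
Proof. by move=> CF j; case: (is_derive_along_mulmx B j w CF). Qed.

(* The Lie bracket of the constant field u and the linear field y |-> B y is the
   constant field B u: the second-order terms cancel by symmetry of the Hessian. *)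
Lemma derive_along_cst_mulmx F u (B : 'M[R]_d) w : C2 F ->
  derive_along (fun=> u) (derive_along (mulmx B) F) w =
  derive_along (mulmx B) (derive_along (fun=> u) F) w + derive_along (fun=> B *m u) F w.
Proof.
move=> CF; rewrite /derive_along grad_along_mulmx // grad_along_cst //.
have E1 : inner (hess F w *m (B *m w)) u = inner (hess F w *m u) (B *m w).
  by rewrite inner_mulmx hess_sym // innerC.
have E2 : inner (B^T *m grad F w) u = inner (grad F w) (B *m u).
  by rewrite inner_mulmx trmxK.
by rewrite innerC innerDr !(innerC u) E1 E2.
Qed.

End Gradient.

(* The Jacobi sum of {F, G} = k (x_F y_G - y_F x_G), written out with the Leibniz rule:
   for G_i, x_i and y_i are its derivatives along two commuting vector fields X and Y,
   and a_i = X x_i, b_i = Y x_i = X y_i, c_i = Y y_i. *)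
Lemma bivector_jacobi (R : comRingType)
    (k x1 y1 a1 b1 c1 x2 y2 a2 b2 c2 x3 y3 a3 b3 c3 : R) :
  k * (x1 * (k * (x2 * c3 + y3 * b2 - (y2 * b3 + x3 * c2)))
       - y1 * (k * (x2 * b3 + y3 * a2 - (y2 * a3 + x3 * b2))))
  + k * (x2 * (k * (x3 * c1 + y1 * b3 - (y3 * b1 + x1 * c3)))
         - y2 * (k * (x3 * b1 + y1 * a3 - (y3 * a1 + x1 * b3))))
  + k * (x3 * (k * (x1 * c2 + y2 * b1 - (y1 * b2 + x2 * c1)))
         - y3 * (k * (x1 * b2 + y2 * a1 - (y1 * a2 + x2 * b1)))) = 0.
Proof. ring. Qed.

Section Jtilde.
Variables (R : realType) (d : nat) (A : 'M[R]_d) (ws : 'cV[R]_d).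
Notation vec := 'cV[R]_d.
Local Notation X := (fun _ : vec => ws).
Local Notation Y := (mulmx A).
Implicit Types (F G : vec -> R) (w : vec).

Lemma Jtilde_skew w : (Jtilde A ws w)^T = - Jtilde A ws w.
Proof.
by rewrite /Jtilde linearZ /= linearB /= /outer !trmx_mul !trmxK -scalerN opprB.
Qed.

Lemma grad_Etilde c w : grad (Etilde c ws) w = - ws.
Proof.
apply/matrixP => i j; rewrite [j]ord1 !mxE /partial.
have : is_derive w (ebase R i) (Etilde c ws) (- ws i 0).
  apply: is_derive_affine => h.
  by rewrite /Etilde innerDr innerZr inner_ebase; ring.
by case.
Qed.

Lemma Jtilde_grad_Etilde c w : ws != 0 -> A^T *m ws = 0 ->
  Jtilde A ws w *m grad (Etilde c ws) w = 2^-1 *: (A *m w).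
Proof.
move=> ws0 hAT.
rewrite grad_Etilde /Jtilde -scalemxAl mulmxBl !outer_mulmx !innerNr.
rewrite inner_mulmx hAT inner0r oppr0 scale0r sub0r scaleNr opprK scalerA.
congr (_ *: _); rewrite -/(sqnorm ws); field.
by rewrite sqnorm_eq0.
Qed.

Lemma pbracket_Jtilde F G w :
  pbracket (Jtilde A ws) F G w = (2 * sqnorm ws)^-1 *
    (derive_along X F w * derive_along Y G w - derive_along Y F w * derive_along X G w).
Proof.
rewrite /pbracket /Jtilde -scalemxAl mulmxBl !outer_mulmx innerZr innerBr !innerZr.
by rewrite /derive_along (innerC (A *m w)) (innerC ws (grad G w)); ring.
Qed.

Lemma derive_along_pbracket V F G w : C2 F -> C2 G ->
  derive_along V (pbracket (Jtilde A ws) F G) w = (2 * sqnorm ws)^-1 *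
    (derive_along X F w * derive_along V (derive_along Y G) w
     + derive_along Y G w * derive_along V (derive_along X F) w
     - (derive_along Y F w * derive_along V (derive_along X G) w
        + derive_along X G w * derive_along V (derive_along Y F) w)).
Proof.
move=> CF CG.
have -> : pbracket (Jtilde A ws) F G = (2 * sqnorm ws)^-1 \*:
    (derive_along X F * derive_along Y G - derive_along Y F * derive_along X G).
  by apply/funext => y; rewrite pbracket_Jtilde.
have XF : partial_derivable (derive_along X F) w := partial_derivable_along_cst CF.
have YF : partial_derivable (derive_along Y F) w := partial_derivable_along_mulmx CF.
have XG : partial_derivable (derive_along X G) w := partial_derivable_along_cst CG.
have YG : partial_derivable (derive_along Y G) w := partial_derivable_along_mulmx CG.
rewrite derive_alongZ; last first.
  by move=> i; exact: derivableB (derivableM (XF i) (YG i)) (derivableM (YF i) (XG i)).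
rewrite derive_alongB; first by rewrite (derive_alongM V XF YG) (derive_alongM V YF XG).
- by move=> i; exact: derivableM (XF i) (YG i).
- by move=> i; exact: derivableM (YF i) (XG i).
Qed.

Lemma derive_along_XY_comm F w : C2 F -> A *m ws = 0 ->
  derive_along X (derive_along Y F) w = derive_along Y (derive_along X F) w.
Proof.
by move=> CF hA; rewrite derive_along_cst_mulmx // hA /derive_along inner0r addr0.
Qed.

Lemma pbracket_Jtilde_jacobi G1 G2 G3 w : C2 G1 -> C2 G2 -> C2 G3 -> A *m ws = 0 ->
  pbracket (Jtilde A ws) G1 (pbracket (Jtilde A ws) G2 G3) w
  + pbracket (Jtilde A ws) G2 (pbracket (Jtilde A ws) G3 G1) w
  + pbracket (Jtilde A ws) G3 (pbracket (Jtilde A ws) G1 G2) w = 0.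
Proof.
move=> C1 C2 C3 hA; rewrite !pbracket_Jtilde !derive_along_pbracket //.
by rewrite !derive_along_XY_comm //; apply: bivector_jacobi.
Qed.

End Jtilde.

Theorem theoremA2 (R : realType) (d : nat) (A : 'M[R]_d) (ws : 'cV[R]_d)
  (hws : ws != 0) (hA : A *m ws = 0) (hAT : A^T *m ws = 0) (c : R) :
  (forall w : 'cV[R]_d, (Jtilde A ws w)^T = - Jtilde A ws w) /\
  (forall G1 G2 G3 : 'cV[R]_d -> R, C2 G1 -> C2 G2 -> C2 G3 ->
     forall w : 'cV[R]_d,
       pbracket (Jtilde A ws) G1 (pbracket (Jtilde A ws) G2 G3) w
     + pbracket (Jtilde A ws) G2 (pbracket (Jtilde A ws) G3 G1) w
     + pbracket (Jtilde A ws) G3 (pbracket (Jtilde A ws) G1 G2) w = 0) /\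
  (forall w : 'cV[R]_d,
     2^-1 *: (A *m w) = Jtilde A ws w *m grad (Etilde c ws) w).
Proof.
split; first exact: Jtilde_skew.
split; first by move=> G1 G2 G3 C1 C2 C3 w; exact: pbracket_Jtilde_jacobi.
by move=> w; rewrite Jtilde_grad_Etilde.
Qed.
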